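(* Let $n\ge1$, $0\le c_0<c_1<\dots<c_n$, $v_0\ge v_1\ge\dots\ge v_n>0$, $0\le\rho_k<\frac{v_k}{2}$ ($k=0,\dots,n$), and let $B=(b_{jk})_{j,k=0}^n$ with $b_{jk}=v_k-c_k$ if $j>k$, $b_{kk}=\frac{v_k}{2}-c_k-\rho_k$, $b_{jk}=-c_j$ if $j<k$. Let $\mathbf{p}$ be the ESS for $B$. If $j<n$ and $c_j\ge c_n+\rho_n-\frac12v_n$, then $p_j=0$.
   Context: Strategies are indexed $0,\dots,n$, $\overline\Delta=\{\mathbf{q}\in[0,1]^{n+1}:\sum q_j=1\}$. $\mathbf{p}\in\overline\Delta$ is an ESS for $B$ if (i) $\mathbf{p}^TB\mathbf{p}\ge\mathbf{q}^TB\mathbf{p}$ for all $\mathbf{q}\in\overline\Delta$ and (ii) whenever $\mathbf{q}\ne\mathbf{p}$ and $\mathbf{p}^TB\mathbf{p}=\mathbf{q}^TB\mathbf{p}$, then $\mathbf{p}^TB\mathbf{q}>\mathbf{q}^TB\mathbf{q}$. For such $B$ an ESS exists and is unique. *)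

From mathcomp Require Import all_boot all_order all_algebra.
Set Implicit Arguments. Unset Strict Implicit. Unset Printing Implicit Defensive.
Import Order.TTheory GRing.Theory Num.Theory.
Local Open Scope ring_scope.

Definition in_simplex (R : realFieldType) (n : nat) (q : 'I_n.+1 -> R) : Prop :=
  (forall j, 0 <= q j <= 1) /\ \sum_(j < n.+1) q j = 1.

Definition payoff (R : realFieldType) (n : nat) (B : 'M[R]_n.+1)
  (x y : 'I_n.+1 -> R) : R :=
  \sum_(j < n.+1) \sum_(k < n.+1) x j * B j k * y k.

Definition is_ESS (R : realFieldType) (n : nat) (B : 'M[R]_n.+1)
  (p : 'I_n.+1 -> R) : Prop :=
  in_simplex p /\
  (forall q, in_simplex q -> payoff B q p <= payoff B p p) /\
  (forall q, in_simplex q -> q <> p -> payoff B p p = payoff B q p ->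
     payoff B q q < payoff B p q).

Definition Bmat (R : realFieldType) (n : nat) (c v rho : 'I_n.+1 -> R)
  : 'M[R]_n.+1 :=
  \matrix_(j, k)
    (if (k < j)%N then v k - c k
     else if j == k then v k / 2 - c k - rho k
     else - c j).

From mathcomp Require Import all_boot all_order all_algebra.
From mathcomp Require Import ring lra.
Set Implicit Arguments. Unset Strict Implicit. Unset Printing Implicit Defensive.
Import Order.TTheory GRing.Theory Num.Theory.
Local Open Scope ring_scope.

(** Suppose some [j < n] is played by the ESS [p]; let [s] be the largest
    index below [n] in the support of [p].  As [p] is a best reply to itself,
    every pure strategy in its support earns a maximal payoff against [p], so
    [(B p)_n <= (B p)_s].  But against a population with no mass strictly
    between [s] and [n], the row difference gives
    [(B p)_n - (B p)_s = (v_s/2 + rho_s) p_s + (c_s + v_n/2 - c_n - rho_n) p_n],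
    which is positive because [p_s > 0] and [c_s >= c_j]. *)

Section Games.
Variables (R : realFieldType) (n : nat).
Implicit Types (B : 'M[R]_n.+1) (p x y : 'I_n.+1 -> R) (s t : 'I_n.+1).

Definition pure_payoff B y s : R := \sum_(k < n.+1) B s k * y k.

Lemma payoffE B x y : payoff B x y = \sum_(i < n.+1) x i * pure_payoff B y i.
Proof.
apply: eq_bigr => i _; rewrite /pure_payoff mulr_sumr.
by apply: eq_bigr => k _; rewrite mulrA.
Qed.

Lemma in_simplexP p :
  (forall i, 0 <= p i) -> \sum_(i < n.+1) p i = 1 -> in_simplex p.
Proof.
move=> p_ge0 p_sum; split=> // i; rewrite p_ge0 -p_sum (bigD1 i) //=.
by rewrite lerDl sumr_ge0.
Qed.

Definition transfer p s t i : R := p i + p s * ((i == t)%:R - (i == s)%:R).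

Lemma sum_delta (u : 'I_n.+1 -> R) t : \sum_(i < n.+1) (i == t)%:R * u i = u t.
Proof.
by rewrite (bigD1 t) //= eqxx mul1r big1 ?addr0 // => i /negbTE ->; rewrite mul0r.
Qed.

Lemma in_simplex_transfer p s t : in_simplex p -> in_simplex (transfer p s t).
Proof.
case=> p01 p_sum; have p_ge0 i : 0 <= p i by case/andP: (p01 i).
apply: in_simplexP => [i|].
  rewrite /transfer; case: (eqVneq i s) => [->|ns].
    case: (eqVneq s t) => [->|st]; first by rewrite subrr mulr0 addr0.
    by rewrite sub0r mulrN1 subrr.
  case: (eqVneq i t) => [->|nt]; first by rewrite subr0 mulr1 addr_ge0.
  by rewrite subrr mulr0 addr0.
rewrite /transfer big_split /= -mulr_sumr sumrB.
have sum_eq u : \sum_(i < n.+1) (i == u)%:R = 1 :> R.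
  by rewrite -[RHS](sum_delta (fun=> 1) u); apply: eq_bigr => i _; rewrite mulr1.
by rewrite !sum_eq subrr mulr0 addr0.
Qed.

Lemma payoff_transfer B p y s t :
  payoff B (transfer p s t) y =
  payoff B p y + p s * (pure_payoff B y t - pure_payoff B y s).
Proof.
rewrite !payoffE /transfer.
under eq_bigr do rewrite mulrDl -mulrA mulrBl.
by rewrite big_split /= -mulr_sumr sumrB !sum_delta.
Qed.

Lemma ESS_pure_payoff_le B p s t :
  is_ESS B p -> 0 < p s -> pure_payoff B p t <= pure_payoff B p s.
Proof.
case=> p_simplex [p_nash _] ps_gt0.
have := p_nash _ (in_simplex_transfer s t p_simplex).
by rewrite payoff_transfer gerDl pmulr_rle0 // subr_le0.
Qed.

End Games.

Lemma pure_payoff_Bmat_last_sub (R : realFieldType) (n : nat)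
    (c v rho p : 'I_n.+1 -> R) (s : 'I_n.+1) :
  (s < n)%N -> (forall k : 'I_n.+1, (s < k < n)%N -> p k = 0) ->
  pure_payoff (Bmat c v rho) p ord_max - pure_payoff (Bmat c v rho) p s =
  (v s / 2 + rho s) * p s +
  (c s + v ord_max / 2 - c ord_max - rho ord_max) * p ord_max.
Proof.
move=> s_lt_n p_gap; have s_max : s != ord_max by rewrite -val_eqE /= ltn_eqF.
rewrite /pure_payoff -sumrB (bigD1 s) // (bigD1 ord_max) 1?eq_sym //= addrA.
rewrite !mxE /= !ltnn s_lt_n (leq_gtF (ltnW s_lt_n)) !eqxx (negbTE s_max).
rewrite big1 ?addr0; first by field.
move=> k /andP[k_s k_max]; rewrite !mxE.
have k_lt_n : (k < n)%N by move: k_max; rewrite -val_eqE ltn_neqAle -ltnS ltn_ord andbT.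
case: (ltngtP k s) => [_|s_lt_k|/val_inj k_eq_s]; last by rewrite k_eq_s eqxx in k_s.
  by rewrite /= k_lt_n subrr.
by rewrite p_gap ?s_lt_k ?k_lt_n // !mulr0 subrr.
Qed.

Theorem lemma5p2 (R : realFieldType) (n : nat) (c v rho p : 'I_n.+1 -> R)
  (hn : (1 <= n)%N)
  (hc0 : 0 <= c ord0)
  (hc : forall j k : 'I_n.+1, (j < k)%N -> c j < c k)
  (hv : forall j k : 'I_n.+1, (j <= k)%N -> v k <= v j)
  (hvn : 0 < v ord_max)
  (hrho : forall k, 0 <= rho k /\ rho k < v k / 2)
  (hp : is_ESS (Bmat c v rho) p)
  (j : 'I_n.+1) (hj : (j < n)%N)
  (hcj : c ord_max + rho ord_max - v ord_max / 2 <= c j) :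
  p j = 0.
Proof.
have [[p01 _] _] := hp; have p_ge0 i : 0 <= p i by case/andP: (p01 i).
apply/eqP; rewrite eq_le p_ge0 andbT leNgt; apply/negP => pj_gt0.
pose supp_below_n (i : 'I_n.+1) := (i < n)%N && (0 < p i).
have [|s /andP[s_lt_n ps_gt0] s_last] := @arg_maxnP _ j supp_below_n val.
  by rewrite /supp_below_n hj pj_gt0.
have p_gap (k : 'I_n.+1) : (s < k < n)%N -> p k = 0.
  case/andP=> s_lt_k k_lt_n; apply/eqP; rewrite eq_le p_ge0 andbT leNgt.
  apply/negP => pk_gt0; have := s_last k.
  by rewrite /supp_below_n k_lt_n pk_gt0 /= leqNgt s_lt_k => /(_ isT).
have cj_le_cs : c j <= c s.
  have := s_last j; rewrite /supp_below_n hj pj_gt0 /= leq_eqVlt => /(_ isT).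
  by case/orP=> [/eqP/val_inj->|/hc/ltW].
have vs_gt0 : 0 < v s by apply: lt_le_trans hvn (hv _ _ _); rewrite ltnW.
have [rhos_ge0 _] := hrho s; have pn_ge0 := p_ge0 ord_max.
have := ESS_pure_payoff_le ord_max hp ps_gt0.
rewrite -subr_le0 pure_payoff_Bmat_last_sub // leNgt => /negP; apply.
rewrite ltr_pwDl ?mulr_gt0 ?mulr_ge0 //; lra.
Qed.
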